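(* Suppose Assumption B holds. Then $\gamma\left(\tfrac1n\mathbf 1\right)\ge\tfrac1n\gamma^*$, where $\mathbf 1$ is the all-ones vector in $\mathbb R^n$ and $\gamma^*=\sup_{\alpha\in\mathrm{relint}(\Omega)}\gamma(\alpha)$.
   Context: $V_S=\{1,\dots,n\}$ (supply locations), $V_D$ a finite set (demand locations), and a bipartite graph $G=(V_S\cup V_D,E)$. Write $\partial(j')=\{i\in V_S:(i,j')\in E\}$ and $\partial(J)=\bigcup_{j'\in J}\partial(j')$. The matrix $\phi=(\phi_{j'k})_{j'\in V_D,k\in V_S}$ is nonnegative with entries summing to $1$. $\Omega$ is the probability simplex in $\mathbb R^n$, and $\mathrm{relint}(\Omega)$ consists of its points with all coordinates positive. Assumption B: for every nonempty $J\subsetneq V_D$, $\sum_{i\in\partial(J)}\sum_{j'\in V_D}\phi_{j'i}>\sum_{j'\in J}\sum_{k\in V_S}\phi_{j'k}$. Define $\mathcal J=\{J\subsetneq V_D:\sum_{j'\in J}\sum_{k\notin\partial(J)}\phi_{j'k}>0\}$, $\lambda_J=\sum_{j'\notin J}\sum_{k\in\partial(J)}\phi_{j'k}$, $\mu_J=\sum_{j'\in J}\sum_{k\notin\partial(J)}\phi_{j'k}$, and for $\alpha\in\mathrm{relint}(\Omega)$, $$\gamma(\alpha)=\min_{J\in\mathcal J}\Big(\sum_{i\in\partial(J)}\alpha_i\Big)\log\frac{\lambda_J}{\mu_J}.$$ (This is the demand-drop exponent of the scaled MaxWeight policy with scaling vector $\alpha$; $\alpha=\frac1n\mathbf 1$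 corresponds to vanilla MaxWeight.) *)

From HB Require Import structures.
From mathcomp Require Import all_boot all_order all_algebra.
From mathcomp Require Import all_classical all_reals all_analysis.
Set Implicit Arguments. Unset Strict Implicit. Unset Printing Implicit Defensive.
Import Order.TTheory GRing.Theory Num.Theory.
Local Open Scope ring_scope.

Section Defs.
Variables (R : realType) (n : nat) (VD : finType).
(* adj i j' <-> (i, j') \in E  (bipartite edge set between supply 'I_n and demand VD) *)
Variable adj : 'I_n -> VD -> bool.
Variable phi : VD -> 'I_n -> R.

Definition nbhd (J : {set VD}) : {set 'I_n} :=
  [set i | [exists j in J, adj i j]].

Definition is_phi_distribution : Prop :=
  (forall j k, 0 <= phi j k) /\ \sum_(j : VD) \sum_(k : 'I_n) phi j k = 1.

Definition assumptionB : Prop :=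
  forall J : {set VD}, J != finset.set0 -> J \proper [set: VD] ->
    \sum_(i in nbhd J) \sum_(j : VD) phi j i > \sum_(j in J) \sum_(k : 'I_n) phi j k.

Definition lambdaJ (J : {set VD}) : R :=
  \sum_(j in ~: J) \sum_(k in nbhd J) phi j k.

Definition muJ (J : {set VD}) : R :=
  \sum_(j in J) \sum_(k in ~: nbhd J) phi j k.

Definition calJ (J : {set VD}) : bool := (J \proper [set: VD]) && (0 < muJ J).

(* gamma(alpha) as an extended real; the minimum over an empty family is +oo *)
Definition gamma (alpha : 'I_n -> R) : \bar R :=
  \big[Order.min/+oo%E]_(J : {set VD} | calJ J)
     ((\sum_(i in nbhd J) alpha i) * ln (lambdaJ J / muJ J))%:E.

Definition relint_simplex : set ('I_n -> R) :=
  [set alpha | (forall i, 0 < alpha i) /\ \sum_(i : 'I_n) alpha i = 1].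

Definition gamma_star : \bar R :=
  ereal_sup [set gamma alpha | alpha in relint_simplex].
End Defs.

From Pilot Require Import Defs.
From HB Require Import structures.
From mathcomp Require Import all_boot all_order all_algebra.
From mathcomp Require Import all_classical all_reals all_analysis.
Set Implicit Arguments.
Unset Strict Implicit.
Unset Printing Implicit Defensive.
Import Order.TTheory GRing.Theory Num.Theory.
Local Open Scope ring_scope.

(* For every J in calJ, Assumption B says exactly that mu_J < lambda_J, so the
   factor ln (lambda_J / mu_J) is positive.  As the weights alpha_i of a point
   of the simplex sum to at most 1 over nbhd J, every gamma alpha, hence
   gamma_star, is at most ln (lambda_J / mu_J).  The uniform vector gives
   nbhd J, which is nonempty, a weight |nbhd J| / n >= 1 / n. *)

Lemma sum_cols_sub_sum_rows (V : zmodType) (I K : finType) (a : I -> K -> V)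
    (A : {set I}) (B : {set K}) :
  \sum_(k in B) \sum_i a i k - \sum_(i in A) \sum_k a i k =
  \sum_(i in ~: A) \sum_(k in B) a i k - \sum_(i in A) \sum_(k in ~: B) a i k.
Proof.
rewrite exchange_big /= (bigID (mem A)) /=.
under [\sum_(i in A) \sum_k a i k]eq_bigr do rewrite (bigID (mem B)) /=.
rewrite big_split /= opprD addrACA subrr add0r.
congr (_ - _); first by apply: eq_bigl => i; rewrite finset.in_setC.
by apply: eq_bigr => i _; apply: eq_bigl => k; rewrite finset.in_setC.
Qed.

Section DemandDropExponent.
Variables (R : realType) (n : nat) (VD : finType).
Variables (adj : 'I_n -> VD -> bool) (phi : VD -> 'I_n -> R).

Local Notation nbhd := (nbhd adj).
Local Notation lambdaJ := (lambdaJ adj phi).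
Local Notation muJ := (muJ adj phi).
Local Notation calJ := (calJ adj phi).
Local Notation gamma := (gamma adj phi).

Hypothesis hB : assumptionB adj phi.

Lemma muJ_lt_lambdaJ (J : {set VD}) : calJ J -> muJ J < lambdaJ J.
Proof.
move=> /andP[J_proper mu_gt0].
have J_neq0 : J != finset.set0.
  by apply: contraTneq _ mu_gt0 => ->; rewrite /Defs.muJ big_set0 ltxx.
have := hB J_neq0 J_proper.
by rewrite -subr_gt0 sum_cols_sub_sum_rows subr_gt0.
Qed.

Lemma ln_ratio_gt0 (J : {set VD}) : calJ J -> 0 < ln (lambdaJ J / muJ J).
Proof.
move=> hJ; have mu_gt0 : 0 < muJ J by case/andP: hJ.
by rewrite ln_gt0 // ltr_pdivlMr // mul1r muJ_lt_lambdaJ.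
Qed.

Lemma nbhd_neq0 (J : {set VD}) : calJ J -> nbhd J != finset.set0.
Proof.
move=> hJ; have mu_gt0 : 0 < muJ J by case/andP: hJ.
have lambda_gt0 := lt_trans mu_gt0 (muJ_lt_lambdaJ hJ).
apply: contraTneq _ lambda_gt0 => nbhd0.
by rewrite /Defs.lambdaJ nbhd0 big1 ?ltxx // => j _; rewrite big_set0.
Qed.

Lemma gamma_le (alpha : 'I_n -> R) (J : {set VD}) : calJ J ->
  (gamma alpha <= ((\sum_(i in nbhd J) alpha i) * ln (lambdaJ J / muJ J))%:E)%E.
Proof. exact: bigmin_le_cond. Qed.

Lemma gamma_relint_le_ln (alpha : 'I_n -> R) (J : {set VD}) :
  calJ J -> relint_simplex alpha ->
  (gamma alpha <= (ln (lambdaJ J / muJ J))%:E)%E.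
Proof.
move=> hJ [alpha_gt0 alpha_sum1].
apply: (le_trans (gamma_le alpha hJ)); rewrite lee_fin ler_piMl //.
  exact: ltW (ln_ratio_gt0 hJ).
rewrite -alpha_sum1 [leRHS](bigID (mem (nbhd J))) /= lerDl.
by apply: sumr_ge0 => i _; exact: ltW.
Qed.

Lemma gamma_star_le_ln (J : {set VD}) : calJ J ->
  (gamma_star adj phi <= (ln (lambdaJ J / muJ J))%:E)%E.
Proof.
move=> hJ; apply: ge_ereal_sup => _ [alpha alpha_relint <-].
exact: gamma_relint_le_ln.
Qed.

Lemma supply_nonempty : is_phi_distribution phi -> (0 < n)%N.
Proof.
case: n phi => // phi0 [_]; rewrite big1 => [/eqP|j _]; last by rewrite big_ord0.
by rewrite eq_sym oner_eq0.
Qed.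

End DemandDropExponent.

Theorem proposition4 (R : realType) (n : nat) (VD : finType)
    (adj : 'I_n -> VD -> bool) (phi : VD -> 'I_n -> R) :
  is_phi_distribution phi ->
  assumptionB adj phi ->
  ((((n%:R)^-1 : R)%R)%:E * gamma_star adj phi
    <= gamma adj phi (fun _ : 'I_n => ((n%:R)^-1 : R)%R))%E.
Proof.
move=> hphi hB.
have inv_n_gt0 : 0 < (n%:R)^-1 :> R by rewrite invr_gt0 ltr0n (supply_nonempty hphi).
apply: le_bigmin => [|J hJ]; first exact: leey.
set L := ln (lambdaJ adj phi J / muJ adj phi J).
apply: (@le_trans _ _ ((n%:R^-1)%:E * L%:E)%E).
  by apply: lee_wpmul2l (gamma_star_le_ln hB hJ); rewrite lee_fin ltW.
have nbhd_card_gt0 : (0 < #|nbhd adj J|)%N by rewrite card_gt0 (nbhd_neq0 hB hJ).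
rewrite -EFinM lee_fin sumr_const mulrnAl -[leLHS]mulr1n ler_wpMn2l //.
exact: mulr_ge0 (ltW inv_n_gt0) (ltW (ln_ratio_gt0 hB hJ)).
Qed.
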